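(* Let $F$ be a Ferrers diagram of semiperimeter $n+1$, let $G=G(F)$, and let $c'\in\mathsf{Rec}(G)$ with canonical toppling $\mathsf{CanonTop}(c')=(U^{(0)}_{c'},V^{(1)}_{c'},U^{(1)}_{c'},V^{(2)}_{c'},\ldots)$. Define the configuration $c=(c_1,\ldots,c_n)$ by \[ c_j=\begin{cases}\big|\{\ell\in V^{(k)}_{c'} : j<\ell,\ k>i\}\big| & \text{if } j\in U^{(i)}_{c'},\\[2pt] \big|\{\ell\in U^{(k)}_{c'} : j>\ell,\ k\ge i\}\big| & \text{if } j\in V^{(i)}_{c'}.\end{cases} \] Then $c\in\mathsf{Rec}^{\mathsf{min}}(G)$ and $\mathsf{CanonTop}(c)=\mathsf{CanonTop}(c')$. (This $c$ is denoted $\mathsf{minrec}(c')$.) Moreover, if $c'\in\mathsf{Rec}^{\mathsf{min}}(G)$, then $\mathsf{minrec}(c')=c'$.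
   Context: Ferrers diagrams and graphs: a Ferrers diagram $F$ (English convention, left-justified rows of weakly decreasing lengths from top to bottom) of semiperimeter $n+1$ has its rows and columns labeled by $0,1,\ldots,n$ as follows: traverse the south-east boundary path of $F$ from its top-right corner to its bottom-left corner; its $n+1$ unit steps are labeled $0,1,\ldots,n$ in order; a vertical step gives its label to the row it bounds, a horizontal step gives its label to the column it bounds (so the top row is labeled $0$). Let $\mathsf{rows}(F)$, $\mathsf{cols}(F)$ be the sets of row and column labels; they partition $\{0,\ldots,n\}$, and for $i\in\mathsf{rows}(F)$, $j\in\mathsf{cols}(F)$, $F$ has a cell in row $i$ and column $j$ iff $i<j$. The Ferrers graph $G(F)$ has vertex set $\{0,\ldots,n\}$ and an edge between $i\in\mathsf{rows}(F)$ and $j\in\mathsf{cols}(F)$ iff $i<j$. Sandpile model: vertex $0$ is the sink. A configuration is $c=(c_1,\ldots,c_n)\in\mathbb{N}^n$ ($c_v$ grains on vertex $v$). A non-sink vertex $v$ is unstable if $c_v\ge\deg(v)$; toppling $v$ decreases $c_v$ by $\deg(v)$ and increases $c_w$ by $1$ for each non-sink neighbour $w$; toppling the sink adds one grain to each of its neighbours. A configuration is stable if every non-sink vertex is stable; a stable configuration is recurrent if it can be obtained from the configuration with $c_v=\deg(v)-1$ for all $v$ by adding grains and toppling unstable vertices until stable. $\mathsf{Rec}(G)$ is the set of recurrent configurations; $\mathsf{Rec}^{\mathsf{min}}(G)$ is the set of recurrent configurations whose total number of grains $\sum_v c_v$ is minimal among all recurrent configurations. Canonical toppling: for $c\in\mathsf{Rec}(G(F))$,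 starting from $c$, topple the sink ($U^{(0)}_c=\{0\}$), then alternately topple simultaneously all unstable vertices lying in $\mathsf{cols}(F)$ (this set is $V^{(1)}_c$), then all unstable vertices in $\mathsf{rows}(F)$ ($U^{(1)}_c$), then all unstable vertices in $\mathsf{cols}(F)$ ($V^{(2)}_c$), etc. For recurrent $c$ each vertex topples exactly once, and $\mathsf{CanonTop}(c)=(U^{(0)}_c,V^{(1)}_c,U^{(1)}_c,V^{(2)}_c,\ldots)$ is an ordered set partition of $\{0,\ldots,n\}$ (trailing empty sets omitted). *)

From mathcomp Require Import all_boot.
Set Implicit Arguments.
Unset Strict Implicit.
Unset Printing Implicit Defensive.

(* Configurations are finite functions V -> nat whose value at the      *)
(* sink is always 0 (the sink carries no grains); only the non-sink     *)
(* values c_v are meaningful.                                           *)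
Section Sandpile.
Variables (V : finType) (e : rel V) (s : V).

Definition config := {ffun V -> nat}.

Definition deg (v : V) : nat := #|[set w | e v w]|.

Definition stable (c : config) : bool :=
  [forall v, (v != s) ==> (c v < deg v)].

(* simultaneous toppling of all vertices of S (each once);
   toppling the sink just sends one grain to each neighbour *)
Definition topple_set (S : {set V}) (c : config) : config :=
  [ffun w => if w == s then 0
             else c w - (if w \in S then deg w else 0) + #|[set u in S | e u w]|].

Definition topple (v : V) (c : config) : config := topple_set [set v] c.

Definition add_grain (v : V) (c : config) : config :=
  [ffun w => c w + (w == v)].

Definition cmax : config := [ffun v => if v == s then 0 else (deg v).-1].

Inductive sp_step : config -> config -> Prop :=
| StepAdd (c : config) v : v != s -> sp_step c (add_grain v c)
| StepTopple (c : config) v : v != s -> deg v <= c v -> sp_step c (topple v c).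

Inductive reachable : config -> Prop :=
| reach_max : reachable cmax
| reach_step (c d : config) : reachable c -> sp_step c d -> reachable d.

Definition recurrent (c : config) : Prop := stable c /\ reachable c.

Definition total (c : config) : nat := \sum_(v | v != s) c v.

Definition recmin (c : config) : Prop :=
  recurrent c /\ forall d, recurrent d -> total c <= total d.

(* Canonical toppling for a bipartition rows / cols (cols = ~~ row). *)
Variable row : pred V.

(* step t >= 1 : odd t topples unstable column vertices (V^(k)),
   even t topples unstable row vertices (U^(k)) *)
Definition side (t : nat) (v : V) : bool := if odd t then ~~ row v else row v.

Definition unstable_in (t : nat) (c : config) : {set V} :=
  [set v | (v != s) && side t v && (deg v <= c v)].

Fixpoint canon_state (c : config) (t : nat) : config * {set V} :=
  match t with
  | 0 => (topple_set [set s] c, [set s])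
  | t'.+1 => let d := (canon_state c t').1 in
             let S := unstable_in t d in (topple_set S d, S)
  end.

(* CanonTop c as an infinite sequence of sets
   (U^(0), V^(1), U^(1), V^(2), ...), padded with empty sets *)
Definition CanonTop (c : config) (t : nat) : {set V} := (canon_state c t).2.

Definition Ulev (c : config) (i : nat) : {set V} := CanonTop c i.*2.
Definition Vlev (c : config) (i : nat) : {set V} :=
  if i is 0 then set0 else CanonTop c (i.*2).-1.

End Sandpile.

(* Ferrers diagrams of semiperimeter n+1, encoded by their south-east   *)
(* boundary path read from the top-right to the bottom-left corner:     *)
(* F`_k = true iff the k-th unit step (label k) is vertical (a row).    *)
(* A word is such a boundary path iff it has length n+1, starts with a  *)
(* vertical step and ends with a horizontal step.                       *)
Definition ferrers (n : nat) (F : seq bool) : Prop :=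
  [/\ size F = n.+1, nth false F 0 = true & nth true F n = false].

Definition isrow (n : nat) (F : seq bool) (i : 'I_n.+1) : bool := nth false F i.

Definition fcell (n : nat) (F : seq bool) (i j : 'I_n.+1) : bool :=
  [&& isrow F i, ~~ isrow F j & i < j].

(* the Ferrers graph G(F), vertex set {0..n} = 'I_n.+1, sink 0 *)
Definition fedge (n : nat) (F : seq bool) : rel 'I_n.+1 :=
  fun i j => fcell F i j || fcell F j i.

(* minrec(c'); levels range over 'I_n.+2, which covers all nonempty
   sets of CanonTop c' for recurrent c' *)
Definition minrec (n : nat) (F : seq bool) (c' : config 'I_n.+1) : config 'I_n.+1 :=
  let U := Ulev (fedge F) ord0 (isrow F) c' in
  let W := Vlev (fedge F) ord0 (isrow F) c' in
  [ffun j : 'I_n.+1 =>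
     if j == ord0 then 0
     else if isrow F j then
       if [pick i : 'I_n.+2 | j \in U i] is Some i then
         #|[set l : 'I_n.+1 | [exists k : 'I_n.+2, (i < k) && (l \in W k)] && (j < l)]|
       else 0
     else
       if [pick i : 'I_n.+2 | j \in W i] is Some i then
         #|[set l : 'I_n.+1 | [exists k : 'I_n.+2, (i <= k) && (l \in U k)] && (l < j)]|
       else 0].

(* Let [topple_time v] be the step of the canonical toppling at which [v]
   topples.  From a stable configuration the canonical toppling topples every
   vertex at most once (grains are conserved), and from a recurrent one Dhar's
   criterion -- no forbidden subconfiguration -- forces every vertex to topple.
   When [v] topples, the only grains it has gained come from its earlier
   neighbours, so [c v] is at least the number of neighbours toppling after [v];
   [minrec c] is exactly this count.  It is stable with the same canonical
   toppling, and it is recurrent: starting high enough, toppling all non-sink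
   vertices in the order of [topple_time] removes precisely the grain each column
   receives from the sink.  Its total is the number of edges not incident to the
   sink, a lower bound for every configuration without forbidden subconfiguration
   (peel off the vertex given by Dhar's criterion).  As [minrec c <= c]
   pointwise, a minimal [c] equals [minrec c].
   Of [G(F)] the argument only uses that it is bipartite between rows and
   columns, that the sink is a row adjacent to every column, and that the last
   column is adjacent to every row. *)

From Pilot Require Import Defs.
From mathcomp Require Import all_boot zify.
Set Implicit Arguments. Unset Strict Implicit. Unset Printing Implicit Defensive.

Lemma card_set_sum_nat (T : finType) (P : pred T) : #|[set x | P x]| = \sum_x (P x : nat).
Proof. by rewrite -sum1dep_card big_mkcond; apply: eq_bigr => x _; case: (P x). Qed.

Section Sandpile.
Variables (V : finType) (e : rel V) (s : V) (row : pred V).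
Hypothesis e_sym : symmetric e.
Hypothesis e_irr : irreflexive e.
Hypothesis e_bip : forall u w, e u w -> row u != row w.
Hypothesis row_sink : row s.
Hypothesis col_sink : forall v, ~~ row v -> e s v.
Hypothesis top_col : exists2 z, ~~ row z & forall r, row r -> e r z.

Local Notation canon_top := (CanonTop e s row).

(** * Neighbour counts and Dhar's criterion *)

Definition deg_in (X : {set V}) (v : V) : nat := \sum_(u in X) (e u v : nat).

Lemma deg_inC (X : {set V}) v : deg e v = deg_in X v + deg_in (~: X) v.
Proof.
rewrite /deg card_set_sum_nat /deg_in (bigID (mem X)) /=.
by congr (_ + _); apply: eq_big => u; rewrite ?inE // e_sym.
Qed.

Lemma deg_in_le (X : {set V}) v : deg_in X v <= deg e v.
Proof. by rewrite (deg_inC X v) leq_addr. Qed.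

Lemma deg_inU (X Y : {set V}) v :
  [disjoint X & Y] -> deg_in (X :|: Y) v = deg_in X v + deg_in Y v.
Proof. by move=> dXY; rewrite /deg_in -bigU //; apply: eq_bigl => u; rewrite inE. Qed.

Lemma card_nbrs (S : {set V}) v : #|[set u in S | e u v]| = deg_in S v.
Proof.
by rewrite card_set_sum_nat /deg_in [RHS]big_mkcond; apply: eq_bigr => u _; case: (u \in S).
Qed.

Lemma deg_in0 v : deg_in set0 v = 0.
Proof. by rewrite /deg_in big_set0. Qed.

Lemma deg_in1 u v : deg_in [set u] v = e u v.
Proof. by rewrite /deg_in big_set1. Qed.

Lemma deg_inD1 (A : {set V}) u v : u \in A -> deg_in A v = e u v + deg_in (A :\ u) v.
Proof. by move=> uA; rewrite /deg_in (big_setD1 u uA). Qed.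

Lemma deg_inS (X Y : {set V}) v : X \subset Y -> deg_in X v <= deg_in Y v.
Proof.
move=> sXY; rewrite /deg_in [leqRHS](big_setID X) (setIidPr sXY) /=.
exact: leq_addr.
Qed.

Lemma deg_in_lt (A : {set V}) v w : w \notin A -> e w v -> deg_in A v < deg e v.
Proof.
move=> wA ewv; rewrite (deg_inC A v) -addn1 leq_add2l.
by apply: leq_trans (deg_inS v (_ : [set w] \subset ~: A)); rewrite ?deg_in1 ?ewv ?sub1set ?inE.
Qed.

Lemma sideS t v : side row t.+1 v = ~~ side row t v.
Proof. by rewrite /side /=; case: (odd t); case: (row v). Qed.

Lemma side_edge t u v : e u v -> side row t u -> ~~ side row t v.
Proof. by move=> /e_bip; rewrite /side; case: (odd t); case: (row u); case: (row v). Qed.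

Lemma sink_edge v : v != s -> e s v = ~~ row v.
Proof.
move=> vs; case: (boolP (row v)) => [vrow | /col_sink //].
by apply: contraTF vrow => /e_bip; rewrite row_sink; case: (row v).
Qed.

Lemma deg_in_rows v : deg_in [set w | row w] v = (if row v then 0 else deg e v).
Proof.
case: (boolP (row v)) => vrow.
  rewrite /deg_in big1 // => u; rewrite inE => urow; apply/eqP; rewrite eqb0.
  by apply: contraTN urow => /e_bip; rewrite vrow; case: (row u).
rewrite (deg_inC [set w | row w] v) [X in _ + X]big1 ?addn0 // => u; rewrite !inE => ucol.
by apply/eqP; rewrite eqb0; apply: contraNN ucol => /e_bip; rewrite (negbTE vrow); case: (row u).
Qed.

(* Dhar's criterion: [A] is a forbidden subconfiguration of [x] when
   [x v < deg_in A v] for every [v] in [A]. *)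
Definition fsc_free (x : config V) : Prop :=
  forall A : {set V}, s \notin A -> A != set0 -> exists2 v, v \in A & deg_in A v <= x v.

(* When [f] separates adjacent vertices, each edge inside [A] is counted once. *)
Definition edges_in (f : V -> nat) (A : {set V}) : nat :=
  \sum_(v in A) \sum_(w in A) (e v w && (f v < f w) : nat).

Section EdgesIn.
Variable f : V -> nat.
Hypothesis f_proper : forall u w, e u w -> f u != f w.

Lemma edges_inD1 (A : {set V}) v :
  v \in A -> edges_in f A = edges_in f (A :\ v) + deg_in (A :\ v) v.
Proof.
move=> vA; rewrite /edges_in /deg_in (big_setD1 v vA) /= (big_setD1 v vA) /= e_irr add0n.
under [X in _ + X = _]eq_bigr => u _ do rewrite (big_setD1 v vA).
rewrite big_split /= addnA addnC -big_split /=; congr (_ + _); apply: eq_bigr => w _.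
rewrite (e_sym v w); case: (boolP (e w v)) => //= /f_proper.
by case: (ltngtP (f v) (f w)).
Qed.

(* Peel off a vertex [v] of [A] with [deg_in A v <= d v], as Dhar's criterion allows. *)
Lemma edges_in_le_sum (d : config V) : fsc_free d ->
  forall A : {set V}, s \notin A -> edges_in f A <= \sum_(v in A) d v.
Proof.
move=> d_free A; have [k] := ubnP #|A|; elim: k A => // k IH A lt_Ak sA.
have [-> | A0] := eqVneq A set0; first by rewrite /edges_in !big_set0.
have [v vA le_v] := d_free A sA A0.
rewrite (edges_inD1 vA) (big_setD1 v vA) addnC leq_add //.
  exact: leq_trans (deg_inS v (subD1set A v)) le_v.
apply: IH; last by rewrite !inE negb_and sA orbT.
by move: lt_Ak; rewrite (cardsD1 v A) vA.
Qed.

End EdgesIn.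

(** * Reachability *)

Lemma reachable_sink (x : config V) : reachable e s x -> x s = 0.
Proof.
elim=> [|y z _ ys step]; first by rewrite ffunE eqxx.
case: step ys => [{}y v vs | {}y v vs _] ys; first by rewrite ffunE ys eq_sym (negbTE vs).
by rewrite ffunE eqxx.
Qed.

Lemma toppleE (x : config V) v w : w != s -> w != v -> topple e s v x w = x w + e v w.
Proof. by move=> ws wv; rewrite ffunE (negbTE ws) in_set1 (negbTE wv) subn0 card_nbrs deg_in1. Qed.

Lemma reachable_ge (x y : config V) :
  reachable e s x -> (forall v, x v <= y v) -> y s = 0 -> reachable e s y.
Proof.
move=> + le_xy ys; have [k] := ubnP (\sum_v (y v - x v)); elim: k x le_xy => // k IH x le_xy.
case: (pickP (fun v => x v < y v)) => [v /= lt_xy | x_eq_y] lt_k x_reach; last first.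
  suff -> : y = x by [].
  by apply/ffunP => v; have := x_eq_y v; have := le_xy v; rewrite /=; lia.
have vs : v != s by apply: contraTneq lt_xy => ->; rewrite ys reachable_sink.
have add_v w : add_grain v x w = x w + (w == v) by rewrite ffunE.
apply: (IH (add_grain v x)) => [w | | ].
- by rewrite add_v; case: eqP => [-> | _] /=; [lia | rewrite addn0].
- suff sum_add : \sum_w (y w - x w) = (\sum_w (y w - add_grain v x w)).+1.
    by rewrite -ltnS -sum_add.
  rewrite (bigD1 v) // [in RHS](bigD1 v) //= add_v eqxx.
  rewrite [in RHS](eq_bigr (fun w => y w - x w)) => [|w /negbTE wv].
    by rewrite /=; lia.
  by rewrite add_v wv addn0.
- exact: reach_step x_reach (StepAdd e x vs).
Qed.

Lemma fsc_free_ge (x y : config V) : fsc_free x -> (forall v, x v <= y v) -> fsc_free y.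
Proof.
move=> x_free le_xy A sA A0; have [v vA le_v] := x_free A sA A0.
by exists v; rewrite // (leq_trans le_v).
Qed.

Lemma fsc_free_topple (x : config V) v : v != s -> fsc_free x -> fsc_free (topple e s v x).
Proof.
move=> vs x_free A sA /set0Pn[u0 u0A].
have [Av0 | Av0] := eqVneq (A :\ v) set0.
  have sub_v : A \subset [set v].
    apply/subsetP => u uA; have : u \notin A :\ v by rewrite Av0 inE.
    by rewrite !inE uA andbT negbK.
  have /set1P u0v := subsetP sub_v u0 u0A.
  exists v; first by rewrite -u0v.
  by have := deg_inS v sub_v; rewrite deg_in1 e_irr leqn0 => /eqP->.
have sAv : s \notin A :\ v by rewrite !inE negb_and sA orbT.
have [w /setD1P[wv wA] le_w] := x_free _ sAv Av0.
have ws : w != s by apply: contraNneq sA => <-.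
exists w; rewrite // toppleE //.
have le_A : deg_in A w <= e v w + deg_in (A :\ v) w.
  case: (boolP (v \in A)) => [vA | vA]; first by rewrite (deg_inD1 w vA).
  by rewrite (setDidPl _) ?leq_addl // disjoint_sym disjoints1.
by rewrite (leq_trans le_A) // addnC leq_add2r.
Qed.

Lemma fsc_free_cmax : fsc_free (cmax e s).
Proof.
move=> A sA /set0Pn[v0 v0A].
suff [v vA [w wA ewv]] : exists2 v, v \in A & exists2 w, w \notin A & e w v.
  have vs : v != s by apply: contraNneq sA => <-.
  by exists v; rewrite // ffunE (negbTE vs); have := deg_in_lt wA ewv; lia.
have [/exists_inP[v vA vcol] | /exists_inPn A_rows] := boolP [exists v in A, ~~ row v].
  by exists v => //; exists s; rewrite ?col_sink.
have [z zcol z_top] := top_col.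
exists v0 => //; exists z; first by apply: contraNN zcol => /A_rows /negPn.
by rewrite e_sym z_top //; apply/negPn/A_rows.
Qed.

Lemma fsc_free_reachable (x : config V) : reachable e s x -> fsc_free x.
Proof.
elim=> [|y z _ y_free step]; first exact: fsc_free_cmax.
case: step y_free => [{}y v vs | {}y v vs _] y_free.
  by apply: fsc_free_ge y_free _ => w; rewrite ffunE leq_addr.
exact: fsc_free_topple.
Qed.

Definition fire_set (x : config V) (Y : {set V}) : config V :=
  [ffun v => if v == s then 0 else x v + deg_in Y v - (if v \in Y then deg e v else 0)].

Lemma fire_set0 (x : config V) : x s = 0 -> fire_set x set0 = x.
Proof.
by move=> xs; apply/ffunP => v; rewrite ffunE deg_in0 inE addn0 subn0; case: eqP => // ->.
Qed.

Lemma topple_fire_set (x : config V) (X : {set V}) v : v \notin X -> v != s ->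
  (forall w, w \in X -> deg e w <= x w + deg_in X w) ->
  topple e s v (fire_set x X) = fire_set x (v |: X).
Proof.
move=> vX vs X_ok; apply/ffunP => w; rewrite !ffunE; case: (eqVneq w s) => // ws.
rewrite card_nbrs deg_in1 /deg_in big_setU1 //= -/(deg_in X w) in_set1 in_setU1.
case: (eqVneq w v) => [-> | wv] /=; first by rewrite (negbTE vX) e_irr; lia.
by case: (boolP (w \in X)) => [/X_ok | _]; lia.
Qed.

(* Topple the vertices of [Y] in increasing order of [rho]: when [v] topples it has
   received a grain from each neighbour in [Y] with smaller [rho]. *)
Lemma reachable_fire_set (x : config V) (Y : {set V}) (rho : V -> nat) :
  reachable e s x -> s \notin Y ->
  (forall v, v \in Y -> deg e v <= x v + \sum_(u in Y | rho u < rho v) (e u v : nat)) ->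
  reachable e s (fire_set x Y).
Proof.
move=> x_reach; have [k] := ubnP #|Y|; elim: k Y => // k IH Y lt_Yk sY Y_ok.
have [-> | /set0Pn[v0 v0Y]] := eqVneq Y set0; first by rewrite fire_set0 ?reachable_sink.
case: (@arg_maxnP _ v0 (fun u => u \in Y) rho v0Y) => v /= vY v_max.
have le_rho w : w \in Y -> rho w <= rho v := v_max w.
have vs : v != s by apply: contraNneq sY => <-.
have drop_v w : w \in Y -> \sum_(u in Y | rho u < rho w) (e u w : nat)
                           = \sum_(u in Y :\ v | rho u < rho w) (e u w : nat).
  move=> wY; apply: eq_bigl => u; rewrite !inE.
  by case: (eqVneq u v) => [-> | //] /=; rewrite ltnNge le_rho ?andbF.
have le_deg_in w : \sum_(u in Y :\ v | rho u < rho w) (e u w : nat) <= deg_in (Y :\ v) w.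
  by rewrite /deg_in [leqRHS](bigID (fun u => rho u < rho w)) leq_addr.
have Yv_ok w : w \in Y :\ v -> deg e w <= x w + \sum_(u in Y :\ v | rho u < rho w) (e u w : nat).
  by move=> /setD1P[_ wY]; rewrite -drop_v // Y_ok.
have vYv : v \notin Y :\ v by rewrite !inE eqxx.
have -> : Y = v |: (Y :\ v) by rewrite setD1K.
rewrite -topple_fire_set //; last by move=> w /Yv_ok; have := le_deg_in w; lia.
apply: reach_step (IH _ _ _ Yv_ok) (StepTopple vs _).
- by move: lt_Yk; rewrite (cardsD1 v Y) vY.
- by rewrite !inE negb_and sY orbT.
rewrite ffunE (negbTE vs) (negbTE vYv) subn0.
by have := Y_ok v vY; rewrite drop_v //; have := le_deg_in v; lia.
Qed.

(** * Canonical toppling *)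

Definition canon_config (c : config V) (t : nat) : config V := (canon_state e s row c t).1.

Definition toppled (c : config V) (t : nat) : {set V} := \bigcup_(i < t.+1) canon_top c i.

Lemma canon_top0 c : canon_top c 0 = [set s].
Proof. by []. Qed.

Lemma mem_canon_topS c t v :
  (v \in canon_top c t.+1) = [&& v != s, side row t.+1 v & deg e v <= canon_config c t v].
Proof. by rewrite /CanonTop /= inE andbA. Qed.

Lemma canon_config0 c v : v != s -> canon_config c 0 v = c v + e s v.
Proof.
move=> vs; rewrite /canon_config /= ffunE (negbTE vs) inE (negbTE vs) subn0.
by rewrite card_nbrs deg_in1.
Qed.

Lemma canon_configS c t v : v != s ->
  canon_config c t.+1 v = canon_config c t v
    - (if v \in canon_top c t.+1 then deg e v else 0) + deg_in (canon_top c t.+1) v.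
Proof.
move=> vs; rewrite /canon_config /= ffunE (negbTE vs); congr (_ + _).
by rewrite card_nbrs.
Qed.

Lemma toppled0 c : toppled c 0 = [set s].
Proof. by rewrite /toppled big_ord1. Qed.

Lemma toppledS c t : toppled c t.+1 = toppled c t :|: canon_top c t.+1.
Proof. by rewrite /toppled big_ord_recr. Qed.

Lemma canon_top_toppled c t i v : i <= t -> v \in canon_top c i -> v \in toppled c t.
Proof. by move=> le_it vi; apply/bigcupP; exists (Ordinal (le_it : i < t.+1)). Qed.

Lemma sink_toppled c t : s \in toppled c t.
Proof. by apply: (@canon_top_toppled c t 0); rewrite ?canon_top0 ?inE. Qed.

Lemma canon_top_side c t v : v \in canon_top c t -> side row t v.
Proof.
by case: t => [|t]; [rewrite canon_top0 inE => /eqP-> | rewrite mem_canon_topS => /and3P[]].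
Qed.

Lemma canon_top_sink c t v : v \in canon_top c t.+1 -> v != s.
Proof. by rewrite mem_canon_topS => /and3P[]. Qed.

Lemma canon_top_unstable c t v : v \in canon_top c t.+1 -> deg e v <= canon_config c t v.
Proof. by rewrite mem_canon_topS => /and3P[]. Qed.

Section StableCanonToppling.
Variable c : config V.
Hypothesis c_stable : stable e s c.

Lemma stable_lt v : v != s -> c v < deg e v.
Proof. by move: c_stable => /forallP/(_ v)/implyP. Qed.

Lemma canon_config_toppled t v : v != s ->
  canon_config c t v + (if v \in toppled c t then deg e v else 0)
    = c v + deg_in (toppled c t) v.
Proof.
elim: t v => [|t IH] v vs; first by rewrite canon_config0 // toppled0 inE (negbTE vs) deg_in1 addn0.
have new_untoppled w : w \in canon_top c t.+1 -> w \notin toppled c t.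
  move=> wS; apply/negP => wT; have := IH w (canon_top_sink wS); rewrite wT.
  have := canon_top_unstable wS; have := stable_lt (canon_top_sink wS).
  have := deg_in_le (toppled c t) w; lia.
have dTS : [disjoint toppled c t & canon_top c t.+1].
  rewrite disjoint_subset; apply/subsetP => w wT; rewrite inE.
  by apply: contraTN wT => /new_untoppled.
rewrite canon_configS // toppledS deg_inU // in_setU; have := IH v vs.
case vS: (v \in canon_top c t.+1); last by rewrite orbF; case: (v \in toppled c t); lia.
by have := canon_top_unstable vS; rewrite orbT (negbTE (new_untoppled v vS)); lia.
Qed.

Lemma canon_config_toppled_lt t v : v != s -> v \in toppled c t -> canon_config c t v < deg e v.
Proof.
move=> vs vT; have := canon_config_toppled t vs; rewrite vT.
have := stable_lt vs; have := deg_in_le (toppled c t) v; lia.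
Qed.

Lemma canon_topS_untoppled t v : v \in canon_top c t.+1 -> v \notin toppled c t.
Proof.
move=> vS; apply/negP => /(canon_config_toppled_lt (canon_top_sink vS)).
by have := canon_top_unstable vS; lia.
Qed.

Lemma canon_top_uniq i j v : v \in canon_top c i -> v \in canon_top c j -> i = j.
Proof.
wlog le_ij : i j / i <= j => [wlog_ij vi vj|].
  by case: (leqP i j) => [/wlog_ij|/ltnW/wlog_ij/(_ vj vi)]; auto.
case: j le_ij => [|j]; first by case: i.
rewrite leq_eqVlt ltnS => /predU1P[-> // | le_ij vi vj].
by have := canon_topS_untoppled vj; rewrite (canon_top_toppled le_ij vi).
Qed.

(* By bipartiteness the vertices toppling at step [t] send no grain to side [t]. *)
Lemma canon_config_side_lt t v : v != s -> side row t v -> canon_config c t v < deg e v.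
Proof.
elim: t v => [|t IH] v vs vt.
  rewrite canon_config0 //; have := stable_lt vs.
  suff -> : e s v = false by rewrite addn0.
  by apply: contraTF vt => esv; apply: (side_edge (t := 0) esv).
case vS: (v \in canon_top c t.+1).
  by apply: canon_config_toppled_lt => //; rewrite toppledS inE vS orbT.
rewrite canon_configS // vS subn0 /deg_in big1 ?addn0 => [|u /canon_top_side ut].
  by move: vS; rewrite mem_canon_topS vs vt /= ltnNge => ->.
by apply/eqP; rewrite eqb0; apply: contraTN vt => euv; apply: side_edge euv ut.
Qed.

End StableCanonToppling.

(** * Toppling times and the configuration minrec *)

Section ToppleTime.
Variable c : config V.
Hypothesis c_stable : stable e s c.
Hypothesis c_fsc_free : fsc_free c.

(* The untoppled vertices do not form a forbidden subconfiguration, so one of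
   them is unstable, hence on the side that topples next. *)
Lemma toppled_proper t : toppled c t != setT -> toppled c t \proper toppled c t.+1.
Proof.
move=> T_full; have sT : s \notin ~: toppled c t by rewrite inE sink_toppled.
have [|u] := c_fsc_free sT.
  by apply: contra T_full => /eqP T0; rewrite -[toppled c t]setCK T0 setC0.
rewrite inE => uT le_u; have us : u != s by apply: contraNneq uT => ->; apply: sink_toppled.
have unstable_u : deg e u <= canon_config c t u.
  have := canon_config_toppled c_stable t us; rewrite (negbTE uT) addn0.
  by have := deg_inC (toppled c t) u; lia.
have uS : u \in canon_top c t.+1.
  rewrite mem_canon_topS us unstable_u andbT sideS.
  by apply: contraTN unstable_u => /(canon_config_side_lt c_stable us); rewrite ltnNge.
by apply/properP; rewrite toppledS subsetUl; split=> //; exists u; rewrite // inE uS orbT.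
Qed.

Lemma toppled_all v : v \in toppled c #|V|.
Proof.
suff : (toppled c #|V| == setT) || (#|V| < #|toppled c #|V| |).
  by rewrite ltnNge max_card orbF => /eqP->; rewrite inE.
elim: #|V| => [|t]; first by rewrite toppled0 cards1 orbT.
case: eqP => [T_full _ | /eqP T_full /= lt_tT].
  by rewrite toppledS T_full setTU eqxx.
by rewrite (leq_ltn_trans lt_tT (proper_card (toppled_proper T_full))) orbT.
Qed.

Definition topple_time v : nat := find (fun t => v \in canon_top c t) (iota 0 #|V|.+1).

Lemma has_topple_time v : has (fun t => v \in canon_top c t) (iota 0 #|V|.+1).
Proof.
have /bigcupP[i _ vi] := toppled_all v.
by apply/hasP; exists (val i); rewrite // mem_iota add0n ltn_ord.
Qed.

Lemma topple_time_le v : topple_time v <= #|V|.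
Proof. by have := has_topple_time v; rewrite has_find size_iota ltnS. Qed.

Lemma topple_timeP v : v \in canon_top c (topple_time v).
Proof.
by have := nth_find 0 (has_topple_time v); rewrite nth_iota ?ltnS ?topple_time_le.
Qed.

Lemma mem_canon_top v t : (v \in canon_top c t) = (topple_time v == t).
Proof.
apply/idP/eqP => [vt | <-]; last exact: (topple_timeP v).
exact: (canon_top_uniq c_stable (topple_timeP v) vt).
Qed.

Lemma mem_toppled v t : (v \in toppled c t) = (topple_time v <= t).
Proof.
apply/bigcupP/idP => [[i _] | le_vt]; first by rewrite mem_canon_top -ltnS => /eqP->.
by exists (Ordinal (le_vt : topple_time v < t.+1)); rewrite // mem_canon_top.
Qed.

Lemma topple_time_sink : topple_time s = 0.
Proof. by apply/eqP; rewrite -mem_canon_top canon_top0 inE. Qed.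

Lemma topple_time_gt0 v : v != s -> 0 < topple_time v.
Proof. by move=> vs; rewrite lt0n -mem_canon_top canon_top0 inE. Qed.

Lemma topple_time_edge u v : e u v -> topple_time u != topple_time v.
Proof.
move=> euv; apply/eqP => tuv; have := side_edge euv (canon_top_side (topple_timeP u)).
by rewrite tuv (canon_top_side (topple_timeP v)).
Qed.

Definition earlier_deg v : nat := \sum_w (e w v && (topple_time w < topple_time v) : nat).
Definition later_deg v : nat := \sum_w (e v w && (topple_time v < topple_time w) : nat).

Lemma deg_earlier_later v : deg e v = earlier_deg v + later_deg v.
Proof.
rewrite /deg card_set_sum_nat /earlier_deg /later_deg -big_split; apply: eq_bigr => w _ /=.
rewrite (e_sym w v); case: (boolP (e v w)) => //= /topple_time_edge.
by case: (ltngtP (topple_time v) (topple_time w)).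
Qed.

Lemma deg_in_toppled_earlier v t :
  topple_time v = t.+1 -> deg_in (toppled c t) v = earlier_deg v.
Proof.
move=> tv; rewrite /deg_in big_mkcond /earlier_deg; apply: eq_bigr => w _.
by rewrite mem_toppled tv ltnS; case: (_ <= t); case: (e w v).
Qed.

Lemma deg_le_earlier v : v != s -> deg e v <= c v + earlier_deg v.
Proof.
move=> vs; have [t tv] : exists t, topple_time v = t.+1.
  by exists (topple_time v).-1; have := topple_time_gt0 vs; lia.
have vS : v \in canon_top c t.+1 by rewrite mem_canon_top tv.
have := canon_config_toppled c_stable t vs; rewrite (negbTE (canon_topS_untoppled c_stable vS)).
by rewrite addn0 deg_in_toppled_earlier //; have := canon_top_unstable vS; lia.
Qed.

Lemma later_deg_le v : v != s -> later_deg v <= c v.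
Proof. by move=> vs; have := deg_le_earlier vs; have := deg_earlier_later v; lia. Qed.

Definition later_config : config V := [ffun v => if v == s then 0 else later_deg v].

Lemma later_config_le v : later_config v <= c v.
Proof. by rewrite ffunE; case: eqP => // /eqP/later_deg_le. Qed.

Lemma later_config_stable : stable e s later_config.
Proof.
apply/forallP => v; apply/implyP => vs; rewrite ffunE (negbTE vs).
by have := deg_earlier_later v; have := deg_le_earlier vs; have := stable_lt c_stable vs; lia.
Qed.

Lemma canon_top_later_config t : canon_top later_config t = canon_top c t.
Proof.
suff [] : toppled later_config t = toppled c t /\ canon_top later_config t = canon_top c t by [].
elim: t => [|t [IHT IHS]]; first by rewrite !toppled0.
suff ES : canon_top later_config t.+1 = canon_top c t.+1 by rewrite !toppledS IHT ES.
apply/setP => v; rewrite !mem_canon_topS; case: (eqVneq v s) => //= vs.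
case: (boolP (side row t.+1 v)) => //= vt.
case vT: (v \in toppled c t).
  have vT_later : v \in toppled later_config t by rewrite IHT.
  have := canon_config_toppled_lt c_stable vs vT.
  have := canon_config_toppled_lt later_config_stable vs vT_later.
  by move=> lt1 lt2; apply/idP/idP; lia.
have := canon_config_toppled c_stable t vs; have := canon_config_toppled later_config_stable t vs.
rewrite IHT vT !addn0 ffunE (negbTE vs) => -> cv.
rewrite cv; apply/idP/idP => [|unst]; first by have := later_deg_le vs; lia.
have vS : v \in canon_top c t.+1 by rewrite mem_canon_topS vs vt cv.
rewrite deg_in_toppled_earlier; last by apply/eqP; rewrite -mem_canon_top.
by rewrite deg_earlier_later addnC.
Qed.

Lemma total_later_config : Defs.total s later_config = edges_in topple_time [set~ s].
Proof.
rewrite /Defs.total /edges_in; apply: eq_big => [v | v vs]; first by rewrite in_setC1.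
rewrite ffunE (negbTE vs) /later_deg (bigD1 s) //= topple_time_sink ltn0 andbF add0n.
by apply: eq_bigl => w; rewrite in_setC1.
Qed.

Lemma later_config_total_min (d : config V) :
  fsc_free d -> Defs.total s later_config <= Defs.total s d.
Proof.
move=> d_free; rewrite total_later_config /Defs.total.
have -> : \sum_(v | v != s) d v = \sum_(v in [set~ s]) d v by apply: eq_bigl => v; rewrite !inE.
have := edges_in_le_sum (@topple_time_edge) d_free (A := [set~ s]).
by rewrite setC11 => /(_ isT).
Qed.

Lemma earlier_deg_sink v : v != s ->
  earlier_deg v = e s v + \sum_(u in [set~ s] | topple_time u < topple_time v) (e u v : nat).
Proof.
move=> vs; rewrite /earlier_deg (bigD1 s) //= topple_time_sink topple_time_gt0 // andbT.
congr (_ + _); rewrite big_mkcond [RHS]big_mkcond; apply: eq_bigr => u _.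
by rewrite in_setC1; case: (u != s); case: (_ < _); rewrite ?andbT ?andbF.
Qed.

Definition later_config_plus (k : nat) : config V :=
  [ffun v => later_config v + (if row v then 0 else k)].

Lemma later_config_plus0 : later_config_plus 0 = later_config.
Proof. by apply/ffunP => v; rewrite ffunE; case: (row v); rewrite addn0. Qed.

(* Toppling every non-sink vertex once, in the order of [topple_time], loses
   exactly the grain that each column receives from the sink. *)
Lemma reachable_later_config_plus_pred k :
  reachable e s (later_config_plus k.+1) -> reachable e s (later_config_plus k).
Proof.
move=> reach_k1.
suff <- : fire_set (later_config_plus k.+1) [set~ s] = later_config_plus k.
  apply: (reachable_fire_set (rho := topple_time) reach_k1); first by rewrite setC11.
  move=> v; rewrite in_setC1 => vs; rewrite ffunE ffunE (negbTE vs).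
  rewrite deg_earlier_later earlier_deg_sink // sink_edge //.
  by case: (row v) => /=; lia.
apply/ffunP => v; rewrite !ffunE; case: eqP => [-> | /eqP vs]; first by rewrite row_sink.
rewrite in_setC1 vs (deg_inC [set~ s] v) setCK deg_in1 sink_edge //.
by case: (row v) => /=; lia.
Qed.

Lemma reachable_later_config_plus_big : reachable e s (later_config_plus (2 * #|V|)).
Proof.
pose nonsink_rows := [set w | row w] :\ s.
(* [x] lies above [cmax], and firing [nonsink_rows] turns it into the target. *)
pose x : config V := [ffun v => if v == s then 0 else
  if row v then later_config v + deg e v else later_config v + 2 * #|V| - (deg e v).-1].
have deg_le v : deg e v <= #|V| by apply: max_card.
have x_reach : reachable e s x.
  apply: (reachable_ge (reach_max _ _)) => [v | ]; last by rewrite ffunE eqxx.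
  by rewrite !ffunE; case: eqP => // _; case: (row v); have := deg_le v; lia.
have sY : s \notin nonsink_rows by rewrite !inE eqxx.
suff <- : fire_set x nonsink_rows = later_config_plus (2 * #|V|).
  apply: (reachable_fire_set (rho := fun=> 0)) x_reach sY _ => v.
  by rewrite !inE => /andP[vs vrow]; rewrite ffunE (negbTE vs) vrow; lia.
apply/ffunP => v; rewrite !ffunE; case: (eqVneq v s) => [-> | vs]; first by rewrite row_sink addn0.
have := @deg_inD1 [set w | row w] s v; rewrite !inE row_sink deg_in_rows sink_edge // => /(_ isT).
by rewrite /nonsink_rows vs; have := deg_le v; case: (row v) => /=; lia.
Qed.

Lemma later_config_reachable : reachable e s later_config.
Proof.
rewrite -later_config_plus0; elim: (2 * #|V|) reachable_later_config_plus_big => // k IH.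
by move/reachable_later_config_plus_pred/IH.
Qed.

Lemma later_config_recurrent : recurrent e s later_config.
Proof. by split; [apply: later_config_stable | apply: later_config_reachable]. Qed.

End ToppleTime.

End Sandpile.

(** * Ferrers graphs *)

Section Ferrers.
Variables (n : nat) (F : seq bool).
Hypothesis F_ferrers : ferrers n F.

Local Notation e := (@fedge n F).
Local Notation row := (@isrow n F).

Lemma fedge_sym : symmetric e.
Proof. by move=> i j; rewrite /fedge orbC. Qed.

Lemma fedge_irr : irreflexive e.
Proof. by move=> i; rewrite /fedge /fcell ltnn !andbF. Qed.

Lemma fedge_bip i j : e i j -> row i != row j.
Proof. by rewrite /fedge /fcell => /orP[] /and3P[-> /negbTE-> _]. Qed.

Lemma fedge_row i j : row i -> e i j = ~~ row j && (i < j).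
Proof. by move=> irow; rewrite /fedge /fcell irow /= andbF orbF. Qed.

Lemma fedge_col i j : ~~ row i -> e i j = row j && (j < i).
Proof. by move=> icol; rewrite /fedge /fcell (negbTE icol). Qed.

Lemma isrow0 : row ord0.
Proof. by case: F_ferrers. Qed.

Lemma isrow_max : ~~ row ord_max.
Proof. by case: F_ferrers => size_F _ Fn; rewrite /isrow (set_nth_default true) ?size_F // Fn. Qed.

Lemma fedge0 j : ~~ row j -> e ord0 j.
Proof.
move=> jcol; rewrite fedge_row ?isrow0 // jcol lt0n.
by apply: contraNneq jcol => j0; rewrite (_ : j = ord0) ?isrow0 //; apply: val_inj.
Qed.

Lemma fedge_max i : row i -> e i ord_max.
Proof.
move=> irow; rewrite fedge_row // isrow_max ltn_neqAle -ltnS ltn_ord andbT.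
by apply: contraTneq irow => i_n; rewrite (_ : i = ord_max) ?isrow_max //; apply: val_inj.
Qed.

Lemma fedge_top_col : exists2 z, ~~ row z & forall i, row i -> e i z.
Proof. by exists ord_max; [apply: isrow_max | apply: fedge_max]. Qed.

Lemma ferrers_fsc_free (x : config 'I_n.+1) :
  reachable e ord0 x -> fsc_free e ord0 x.
Proof. exact: (fsc_free_reachable fedge_sym fedge_irr isrow0 (@fedge0) fedge_top_col). Qed.

Section FerrersMinrec.
Variable c : config 'I_n.+1.
Hypothesis c_stable : stable e ord0 c.
Hypothesis c_fsc_free : fsc_free e ord0 c.

Local Notation time := (topple_time e ord0 row c).

Let mem_canon_top_c := mem_canon_top fedge_sym (@fedge_bip) isrow0 c_stable c_fsc_free.

Lemma isrow_time v : row v = ~~ odd (time v).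
Proof.
have := canon_top_side isrow0 (topple_timeP fedge_sym (@fedge_bip) isrow0 c_stable c_fsc_free v).
by rewrite /side; case: (odd _); case: (row v).
Qed.

Lemma time_lt v : time v < n.+2.
Proof.
by have := topple_time_le fedge_sym (@fedge_bip) isrow0 c_stable c_fsc_free v; rewrite card_ord.
Qed.

Lemma mem_Ulev v k : (v \in Ulev e ord0 row c k) = (time v == k.*2).
Proof. exact: mem_canon_top_c. Qed.

Lemma mem_Vlev v k :
  (v \in Vlev e ord0 row c k) = (0 < k) && (time v == k.*2.-1).
Proof. by case: k => [|k]; rewrite /Vlev ?mem_canon_top_c ?inE. Qed.

Lemma minrec_row j : j != ord0 -> row j ->
  minrec F c j = later_deg e ord0 row c j.
Proof.
move=> j0 jrow; have := isrow_time j; rewrite ffunE (negbTE j0) jrow => time_j.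
case: pickP => [i | no_i]; last first.
  by have := no_i (inord (time j)./2); rewrite mem_Ulev inordK; have := time_lt j; lia.
rewrite mem_Ulev => /eqP ti; rewrite /later_deg card_set_sum_nat; apply: eq_bigr => l _.
congr nat_of_bool; apply/idP/idP => [/andP[/existsP[k /andP[lt_ik]]] | ].
  rewrite mem_Vlev => /andP[k0 /eqP tl] jl.
  have lcol : ~~ row l by rewrite isrow_time tl; lia.
  by rewrite fedge_row // lcol jl ti tl; lia.
rewrite fedge_row // => /andP[/andP[lcol jl] ltjl]; rewrite jl andbT.
have := isrow_time l; rewrite (negbTE lcol) => time_l.
apply/existsP; exists (inord (time l).+1./2).
by rewrite mem_Vlev inordK; have := time_lt l; lia.
Qed.

Lemma minrec_col j : ~~ row j -> minrec F c j = later_deg e ord0 row c j.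
Proof.
move=> jcol; have j0 : j != ord0 by apply: contraNneq jcol => ->; apply: isrow0.
have := isrow_time j; rewrite ffunE (negbTE j0) (negbTE jcol) => time_j.
case: pickP => [i | no_i]; last first.
  by have := no_i (inord (time j).+1./2); rewrite mem_Vlev inordK; have := time_lt j; lia.
rewrite mem_Vlev => /andP[i0 /eqP ti]; rewrite /later_deg card_set_sum_nat; apply: eq_bigr => l _.
congr nat_of_bool; apply/idP/idP => [/andP[/existsP[k /andP[le_ik]]] | ].
  rewrite mem_Ulev => /eqP tl lj.
  have lrow : row l by rewrite isrow_time tl; lia.
  by rewrite fedge_col // lrow lj ti tl; lia.
rewrite fedge_col // => /andP[/andP[lrow lj] ltjl]; rewrite lj andbT.
have := isrow_time l; rewrite lrow => time_l.
apply/existsP; exists (inord (time l)./2).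
by rewrite mem_Ulev inordK; have := time_lt l; lia.
Qed.

Lemma minrec_later_config : minrec F c = later_config e ord0 row c.
Proof.
apply/ffunP => j; case: (eqVneq j ord0) => [-> | j0]; first by rewrite !ffunE eqxx.
rewrite [RHS]ffunE (negbTE j0).
by case: (boolP (row j)) => [/(minrec_row j0) | /minrec_col].
Qed.

Lemma later_config_ferrers_recurrent : recurrent e ord0 (later_config e ord0 row c).
Proof.
exact: (later_config_recurrent fedge_sym fedge_irr (@fedge_bip) isrow0 (@fedge0)
         c_stable c_fsc_free).
Qed.

Lemma minrec_recmin : recmin e ord0 (minrec F c).
Proof.
rewrite minrec_later_config; split; first exact: later_config_ferrers_recurrent.
move=> d [_ /ferrers_fsc_free d_free].
exact: (later_config_total_min fedge_sym fedge_irr (@fedge_bip) isrow0 c_stable c_fsc_free d_free).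
Qed.

Lemma canon_top_minrec : CanonTop e ord0 row (minrec F c) =1 CanonTop e ord0 row c.
Proof.
rewrite minrec_later_config => t.
exact: (canon_top_later_config fedge_sym (@fedge_bip) isrow0 c_stable c_fsc_free).
Qed.

(* [minrec c] lies pointwise below [c] and has minimal total, so equality of
   totals forces equality everywhere. *)
Lemma recmin_minrec_id : recmin e ord0 c -> minrec F c = c.
Proof.
move=> [[_ c_reach] c_min]; rewrite minrec_later_config; apply/ffunP => v.
have [-> | v0] := eqVneq v ord0; first by rewrite ffunE eqxx (reachable_sink c_reach).
have le_later u := later_config_le fedge_sym (@fedge_bip) isrow0 c_stable c_fsc_free u.
have sum_eq := leqif_sum (P := fun u => u != ord0) (fun u _ => leqif_eq (le_later u)).
have := c_min _ later_config_ferrers_recurrent; rewrite /Defs.total (geq_leqif sum_eq).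
by move=> /forall_inP/(_ v v0)/eqP.
Qed.

End FerrersMinrec.

End Ferrers.

Theorem lemma3p5 (n : nat) (F : seq bool) (c' : config 'I_n.+1) :
  ferrers n F ->
  recurrent (fedge F) ord0 c' ->
  recmin (fedge F) ord0 (minrec F c') /\
  CanonTop (fedge F) ord0 (isrow F) (minrec F c') =1
    CanonTop (fedge F) ord0 (isrow F) c' /\
  (recmin (fedge F) ord0 c' -> minrec F c' = c').
Proof.
move=> F_ferrers [c_stable c_reach].
have c_free := ferrers_fsc_free F_ferrers c_reach.
split; first exact: (minrec_recmin F_ferrers c_stable c_free).
split; first exact: (canon_top_minrec F_ferrers c_stable c_free).
exact: (recmin_minrec_id F_ferrers c_stable c_free).
Qed.
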